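(* Let $(G,L,v)$ be a reachable triple and $i\in[4]$ a color. Then one of the following holds: (1) $P(G,L,v,i,D)=\frac12$ for all integers $D\ge2$; (2) $P(G,L,v,i,D)\le\frac{13}{27}$ for all integers $D\ge 2$, and specifically $P(G,L,v,i,D)\le\frac{6}{13}$ when $\deg_G(v)\le1$. Furthermore, when $P(G,L,v,i,D)=\frac12$ for some integer $D\ge2$, one of the following three cases occurs: (a) $\deg_G(v)=0$ and $j,w\notin L(v)$ for two distinct colors $j,w$ other than $i$; (b) $\deg_G(v)=1$ and, denoting by $u$ the neighbor of $v$, $i\notin L(u)$ and $j\notin L(u)\cup L(v)$ for some color $j\neq i$; (c) $\deg_G(v)=2$ and, denoting by $u_1,u_2$ the two neighbors of $v$, the vertices $v,u_1,u_2$ form a triangle and $i\notin L(u_1)\cup L(u_2)$.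
   Context: Colors are $[4]=\{1,2,3,4\}$. A list-coloring instance $(G,L)$ is a finite simple graph $G=(V,E)$ with $L:V\to 2^{[4]}$. For a vertex $v$, $G_v$ is $G$ with $v$ and its incident edges removed, and $G_{v,w}=(G_v)_w$. If $v$ has neighbors $v_1,\dots,v_d$ (in a fixed order), then for $k\in[d]$ and a color $j$, $L_{k,j}$ is the list assignment on $G_v$ with $L_{k,j}(v_\ell)=L(v_\ell)\setminus\{j\}$ for $\ell<k$ and $L_{k,j}(u)=L(u)$ for all other vertices $u$ (so $L_{1,j}=L$). A triple $(G,L,v)$ with $v\in V$ is reachable if $\deg_G(u)\le3$ and $|L(u)|\ge\deg_G(u)+1$ for every $u\in V$, and moreover $\deg_G(v)\le2$ and $|L(v)|\ge\deg_G(v)+2$. The procedure $P(G,L,v,i,D)$ ($i\in[4]$, $D$ an integer) is defined recursively (empty products equal $1$): (a) If $i\notin L(v)$, return $0$. Otherwise, if $D\le 0$ or $\deg_G(v)=0$, return $1/|L(v)|$. (b) If $\deg_G(v)=1$ with neighbor $v_1$: let $x=P(G_v,L,v_1,i,D-1)$. If $|L(v)|=2$, say $L(v)=\{i,j\}$, let $y=P(G_v,L,v_1,j,D-1)$ and return $\frac{1-x}{2-x-y}$. If $|L(v)|=4$, return $\frac{1-x}{3}$. If $|L(v)|=3$, let $j$ be the unique color in $[4]\setminus L(v)$, $y=P(G_v,L,v_1,j,D-1)$, and return $\frac{1-x}{2+y}$. (c) If $\deg_G(v)=2$: order its neighbors $v_1,v_2$ so that $\deg_G(v_1)\ge\deg_G(v_2)$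 and, if $\deg_G(v_1)=\deg_G(v_2)=1$, so that $i\notin L(v_1)$ implies $i\notin L(v_2)$. Let $u_1,\dots,u_{d_1}$ be the neighbors of $v_1$ in $G_v$ (fixed order) and for $k\in[d_1]$, $w\in[4]$ let $L'_{k,w}$ be the list assignment on $G_{v,v_1}$ with $L'_{k,w}(u_\ell)=L(u_\ell)\setminus\{w\}$ for $\ell<k$ and $L'_{k,w}(u)=L(u)$ otherwise. Set $x_{k,w}=P(G_{v,v_1},L'_{k,w},u_k,w,D-1)$ for $k\in[d_1]$, $w\in L(v_1)$. For $j\in L(v)$ set $f_j=0$ if $j\notin L(v_1)$ and otherwise $f_j=\frac{\prod_{k=1}^{d_1}(1-x_{k,j})}{\sum_{w\in L(v_1)}\prod_{k=1}^{d_1}(1-x_{k,w})}$, and set $y_j=P(G_v,L_{2,j},v_2,j,D-1)$. Return $\frac{(1-f_i)(1-y_i)}{\sum_{j\in L(v)}(1-f_j)(1-y_j)}$. (d) If $\deg_G(v)=3$ with neighbors $v_1,v_2,v_3$: for $j\in L(v)$ let $x_j=P(G_v,L_{1,j},v_1,j,D-1)$, $y_j=P(G_v,L_{2,j},v_2,j,D-1)$, $z_j=P(G_v,L_{3,j},v_3,j,D-1)$, and return $\frac{(1-x_i)(1-y_i)(1-z_i)}{\sum_{j\in L(v)}(1-x_j)(1-y_j)(1-z_j)}$. For reachable triples, all recursive calls are again on reachable triples and case (d) never occurs. *)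

(* Colors [4] = {1,2,3,4} are represented by 'I_4 = {0,1,2,3}. *)
From HB Require Import structures.
From mathcomp Require Import all_boot all_order all_algebra.
Set Implicit Arguments. Unset Strict Implicit. Unset Printing Implicit Defensive.
Import Order.TTheory GRing.Theory Num.Theory.
Local Open Scope ring_scope.

(* A finite simple graph: a finite vertex set (a seq of nat labels; duplicates
   are irrelevant) and an edge predicate; adjacency is symmetrized and made
   irreflexive and restricted to the vertex set. *)
Record graph := Graph { gV : seq nat; gE : nat -> nat -> bool }.

Definition adj (G : graph) (u w : nat) : bool :=
  [&& u \in gV G, w \in gV G, u != w & (gE G u w || gE G w u)].

Definition nbrs (G : graph) (v : nat) : seq nat := [seq w <- undup (gV G) | adj G v w].
Definition deg (G : graph) (v : nat) : nat := size (nbrs G v).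

Definition delv (G : graph) (v : nat) : graph := Graph (filter (predC1 v) (gV G)) (gE G).

Definition color := 'I_4.
Definition lists := nat -> {set color}.

(* L_{k+1,w} w.r.t. the neighbour list us (0-indexed k): remove w from the
   lists of the first k vertices of us. *)
Definition remove_before (us : seq nat) (k : nat) (w : color) (L : lists) : lists :=
  fun u => if u \in take k us then L u :\ w else L u.

(* "fixed order" of neighbours: an arbitrary ordering rule, required to list
   exactly the neighbours of v (see valid_order). *)
Definition order_fun := graph -> nat -> seq nat.
Definition valid_order (pk : order_fun) : Prop :=
  forall G v, perm_eq (pk G v) (nbrs G v).

(* The procedure P(G,L,v,i,D), for D : nat (D <= 0 is represented by D = 0). *)
Fixpoint P (pk : order_fun) (D : nat) (G : graph) (L : lists) (v : nat) (i : color)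
  {struct D} : rat :=
  if i \notin L v then 0 else
  match D with
  | 0%N => (#|L v|%:R)^-1
  | D'.+1 =>
    match pk G v with
    | [::] => (#|L v|%:R)^-1
    | [:: v1] =>
      let Gv := delv G v in
      let x := P pk D' Gv L v1 i in
      if #|L v| == 2%N then
        let y := P pk D' Gv L v1 (odflt i [pick j in L v :\ i]) in
        (1 - x) / (2 - x - y)
      else if #|L v| == 4%N then (1 - x) / 3
      else
        let y := P pk D' Gv L v1 (odflt i [pick j in ~: L v]) in
        (1 - x) / (2 + y)
    | [:: a; b] =>
      let sw := (deg G a < deg G b)%N ||
                [&& deg G a == 1%N, deg G b == 1%N, i \notin L a & i \in L b] in
      let v1 := if sw then b else a in
      let v2 := if sw then a else b in
      let Gv := delv G v in
      let Gvv := delv Gv v1 in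
      let us := pk Gv v1 in
      let g (w : color) := \prod_(k < size us)
          (1 - P pk D' Gvv (remove_before us k w L) (nth 0%N us k) w) in
      let f (j : color) := if j \in L v1 then g j / (\sum_(w in L v1) g w) else 0 in
      let y (j : color) := P pk D' Gv (remove_before [:: v1; v2] 1 j L) v2 j in
      (1 - f i) * (1 - y i) / (\sum_(j in L v) (1 - f j) * (1 - y j))
    | us =>
      let Gv := delv G v in
      let h (j : color) := \prod_(k < size us)
          (1 - P pk D' Gv (remove_before us k j L) (nth 0%N us k) j) in
      h i / (\sum_(j in L v) h j)
    end
  end.

Definition reachable (G : graph) (L : lists) (v : nat) : Prop :=
  (forall u, u \in gV G -> (deg G u <= 3)%N /\ (deg G u + 1 <= #|L u|)%N) /\
  [/\ v \in gV G, (deg G v <= 2)%N & (deg G v + 2 <= #|L v|)%N].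

(* Induction on D shows 0 <= P <= 1/2 for every reachable triple, and then 1/13 <= P
   (1/6 when deg v <= 1) whenever i is in L(v). Degree 0 gives 1/|L(v)|. For deg v = 1
   and |L(v)| = 3 the value is (1 - x_i) / (2 + x_k), where k is the colour missing from
   L(v) and x_c is the value at the neighbour u: it is 1/2 when i and k are both missing
   from L(u), and otherwise a lower bound on x_i or x_k caps it at 6/13.
   For deg v = 2 the list of v is full and P = a_i / (a_i + B) with
   a_j = (1 - f_j)(1 - y_j), where the f_j sum to 1 and lie in [0, 4/7]. If i is in the
   list of a neighbour, then f_i or y_i is at least 1/13 and P <= 13/27. Otherwise
   P = 1 / (1 + B), where B is twice a weighted mean of the 1 - y_j (j <> i), and the y_j
   are values at v2, which has degree <= 1 in G_v. By the degree-1 analysis they all equal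
   1/2, so that B = 1, exactly when v1 v2 is an edge; in every other configuration they
   are at most 6/13, or at most 5/12 but for one colour, or one of them vanishes, and each
   case gives B >= 14/13. *)

From mathcomp Require Import all_boot all_order all_algebra.
From mathcomp Require Import zify lra.
Import Order.TTheory GRing.Theory Num.Theory.
Set Implicit Arguments. Unset Strict Implicit. Unset Printing Implicit Defensive.
Local Open Scope ring_scope.

(** * Graphs and vertex deletion *)

Lemma adjC G u w : adj G u w = adj G w u.
Proof. by rewrite /adj andbCA eq_sym orbC. Qed.

Lemma adj_mem G u w : adj G u w -> (u \in gV G) && (w \in gV G).
Proof. by case/and4P=> -> ->. Qed.

Lemma adj_neq G u w : adj G u w -> u != w.
Proof. by case/and4P. Qed.

Lemma mem_nbrs G u w : (w \in nbrs G u) = adj G u w.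
Proof.
rewrite /nbrs mem_filter mem_undup andb_idr // => /adj_mem.
by case/andP.
Qed.

Lemma uniq_nbrs G u : uniq (nbrs G u).
Proof. by rewrite filter_uniq ?undup_uniq. Qed.

Lemma deg_gt0 G u w : adj G u w -> (0 < deg G u)%N.
Proof. by move=> a; rewrite /deg -has_predT; apply/hasP; exists w; rewrite ?mem_nbrs. Qed.

Lemma mem_delv G x w : (w \in gV (delv G x)) = (w != x) && (w \in gV G).
Proof. by rewrite mem_filter. Qed.

Lemma adj_delv G x u w : adj (delv G x) u w = [&& adj G u w, u != x & w != x].
Proof.
rewrite /adj !mem_delv /=.
by case: (u == x); case: (w == x); rewrite ?andbF ?andbT.
Qed.

Lemma nbrs_delv G x u : nbrs (delv G x) u = [seq w <- nbrs G u | (u != x) && (w != x)].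
Proof.
rewrite /nbrs [gV (delv G x)]/= -filter_undup -!filter_predI.
apply: eq_filter => w /=; rewrite adj_delv.
by case: (w == x); case: (u == x); rewrite ?andbF ?andbT.
Qed.

Lemma deg_delv_le G x u : (deg (delv G x) u <= deg G u)%N.
Proof. by rewrite /deg nbrs_delv size_filter; apply: count_size. Qed.

Lemma deg_delv_adj G u w : adj G u w -> (deg (delv G w) u).+1 = deg G u.
Proof.
move=> a; rewrite /deg nbrs_delv (adj_neq a) size_filter /=.
have := count_predC (pred1 w) (nbrs G u).
by rewrite (count_uniq_mem _ (uniq_nbrs G u)) mem_nbrs a => <-.
Qed.

(** * Sets of colours *)

Lemma cardsC_color (A : {set color}) : (#|A| + #|~: A|)%N = 4%N.
Proof. by rewrite cardsC card_ord. Qed.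

Lemma card_colors (A : {set color}) : (#|A| <= 4)%N.
Proof. by have := cardsC_color A; lia. Qed.

Lemma card_le3_of_notin (A : {set color}) j : j \notin A -> (#|A| <= 3)%N.
Proof.
move=> jA; have : (0 < #|~: A|)%N by apply/card_gt0P; exists j; rewrite inE.
by have := cardsC_color A; lia.
Qed.

Lemma colors_full (A : {set color}) : (4 <= #|A|)%N -> forall j, j \in A.
Proof. by move=> h j; apply/negPn/negP => /card_le3_of_notin; lia. Qed.

Lemma cardsD1_le (A : {set color}) w : (#|A| <= #|A :\ w| + 1)%N.
Proof. by rewrite (cardsD1 w A); case: (w \in A) => /=; lia. Qed.

Lemma card3_missing (A : {set color}) : #|A| = 3%N -> exists k, k \notin A.
Proof.
move=> cA; have : (0 < #|~: A|)%N by have := cardsC_color A; lia.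
by case/card_gt0P => k; rewrite inE; exists k.
Qed.

Lemma card3_missing_uniq (A : {set color}) j k :
  #|A| = 3%N -> j \notin A -> k \notin A -> j = k.
Proof.
move=> cA jA kA; have /card_le1_eqP : (#|~: A| <= 1)%N by have := cardsC_color A; lia.
by apply; rewrite inE.
Qed.

Lemma card2_two_missing (A : {set color}) i : #|A| = 2%N -> i \in A ->
  exists j w : color, [/\ j != w, j != i, w != i, j \notin A & w \notin A].
Proof.
move=> cA iA; have /cards2P [j [w [jw EA]]] : #|~: A| == 2%N.
  by have := cardsC_color A; rewrite cA => /eqP; rewrite eqn_add2l.
have jA : j \notin A by rewrite -in_setC EA !inE eqxx.
have wA : w \notin A by rewrite -in_setC EA !inE eqxx orbT.
by exists j, w; split => //; [apply: contraNneq jA => -> | apply: contraNneq wA => ->].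
Qed.

Lemma card2_missing_other (A : {set color}) i : #|A| = 2%N -> i \notin A ->
  exists2 c, c != i & c \notin A.
Proof.
move=> cA iA; have : (0 < #|~: A :\ i|)%N.
  by have := cardsC_color A; rewrite (cardsD1 i (~: A)) inE iA cA; lia.
by case/card_gt0P => c; rewrite !inE => /andP[ci cA']; exists c.
Qed.

Lemma missing_other_uniq (A : {set color}) i : (2 <= #|A|)%N -> i \notin A ->
  exists2 c, c != i & forall j, j != i -> j \notin A -> j = c.
Proof.
move=> cA iA; have small : (#|~: A :\ i| <= 1)%N.
  by have := cardsC_color A; rewrite (cardsD1 i (~: A)) inE iA; lia.
have other j : j != i -> j \notin A -> j \in ~: A :\ i.
  by move=> ? ?; rewrite !inE; apply/andP.
case: (set_0Vmem (~: A :\ i)) => [E | [c cD]].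
  have [c cA'] : exists c, c \in A by apply/set0Pn; rewrite -card_gt0; lia.
  exists c => [|j ji jA]; first by apply: contraNneq iA => <-.
  by have := other j ji jA; rewrite E inE.
exists c => [|j ji jA]; first by move: cD; rewrite !inE => /andP[].
by apply: (card_le1_eqP small) => //; apply: other.
Qed.

(** * Reachable triples *)

Section ValidOrder.
Variable pk : order_fun.
Hypothesis Hpk : valid_order pk.

Lemma size_pk G v : size (pk G v) = deg G v.
Proof. exact: perm_size (Hpk G v). Qed.

Lemma mem_pk G v w : (w \in pk G v) = adj G v w.
Proof. by rewrite (perm_mem (Hpk G v)) mem_nbrs. Qed.

Lemma uniq_pk G v : uniq (pk G v).
Proof. by rewrite (perm_uniq (Hpk G v)) uniq_nbrs. Qed.

End ValidOrder.

Definition admissible (G : graph) (L : lists) : Prop :=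
  forall u, u \in gV G -> (deg G u <= 3)%N /\ (deg G u + 1 <= #|L u|)%N.

Lemma admissible_shrink G L H (L' : lists) : admissible G L ->
  (forall u, u \in gV H -> [/\ u \in gV G, (deg H u <= deg G u)%N &
      (#|L u| <= #|L' u| + (deg G u - deg H u))%N]) -> admissible H L'.
Proof. by move=> ok sub u /sub [/ok [d3 dL] ? ?]; lia. Qed.

Lemma remove_before_in us k w (L : lists) u :
  u \in take k us -> remove_before us k w L u = L u :\ w.
Proof. by rewrite /remove_before => ->. Qed.

Lemma remove_before_notin us k w (L : lists) u :
  u \notin take k us -> remove_before us k w L u = L u.
Proof. by rewrite /remove_before => /negbTE ->. Qed.

Lemma reachable_nbr G L v u : reachable G L v -> adj G v u -> reachable (delv G v) L u.
Proof.
move=> [ok _] a; split.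
  apply: (admissible_shrink ok) => w; rewrite mem_delv => /andP[_ wG].
  by split => //; [exact: deg_delv_le | lia].
have [_ uG] := andP (adj_mem a).
have uv : u != v by rewrite eq_sym (adj_neq a).
have du : (deg (delv G v) u).+1 = deg G u by apply: deg_delv_adj; rewrite adjC.
by have [d3 dL] := ok u uG; rewrite mem_delv uv uG; split => //; lia.
Qed.

Lemma reachable_second G L v v1 v2 j :
  reachable G L v -> adj G v v1 -> adj G v v2 -> v1 != v2 ->
  reachable (delv G v) (remove_before [:: v1; v2] 1 j L) v2.
Proof.
move=> Hr a1 a2 n12; have [_ [v2G d2 l2]] := reachable_nbr Hr a2.
split; last by rewrite remove_before_notin //= inE eq_sym.
apply: (admissible_shrink Hr.1) => u; rewrite mem_delv => /andP[uv uG].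
split => //; first exact: deg_delv_le.
case: (eqVneq u v1) => [->|uv1]; last by rewrite remove_before_notin ?inE //; lia.
have <- : (deg (delv G v) v1).+1 = deg G v1 by apply: deg_delv_adj; rewrite adjC.
by rewrite remove_before_in ?inE // subSnn; apply: cardsD1_le.
Qed.

Lemma reachable_grandchild pk G L v v1 k w : valid_order pk ->
  reachable G L v -> adj G v v1 -> (k < size (pk (delv G v) v1))%N ->
  reachable (delv (delv G v) v1) (remove_before (pk (delv G v) v1) k w L)
    (nth 0%N (pk (delv G v) v1) k).
Proof.
move=> Hpk [ok _] a1 ks; set us := pk (delv G v) v1; set t := nth 0%N us k.
have lost_edge u : u \in us -> ((deg (delv (delv G v) v1) u).+1 <= deg G u)%N.
  rewrite mem_pk // => a; rewrite deg_delv_adj; [exact: deg_delv_le | by rewrite adjC].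
have tus : t \in us by apply: mem_nth.
have tnt : t \notin take k us by rewrite in_take // index_uniq ?ltnn // uniq_pk.
have t'' : t \in gV (delv (delv G v) v1).
  move: tus; rewrite mem_pk // => a; rewrite mem_delv eq_sym (adj_neq a).
  by case/andP: (adj_mem a).
have tG : t \in gV G by move: t''; rewrite !mem_delv => /and3P[].
split; last first.
  have [d3 dL] := ok t tG; have := lost_edge t tus.
  by rewrite remove_before_notin //; split => //; lia.
apply: (admissible_shrink ok) => u; rewrite !mem_delv => /andP[_ /andP[_ uG]].
split => //; first exact: (leq_trans (deg_delv_le _ _ _) (deg_delv_le _ _ _)).
case: (boolP (u \in take k us)) => ut; last by rewrite remove_before_notin //; lia.
rewrite remove_before_in //; apply: (leq_trans (cardsD1_le _ w)).
by have := lost_edge u (mem_take ut); rewrite leq_add2l; lia.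
Qed.

(** * Arithmetic of the degree-2 formula *)

(* Case (c) of P at a vertex whose list is full, as forced by degree 2; [f] and [y] are
   the paper's f_j and y_j. *)
Definition deg2_ratio (f y : color -> rat) (i : color) : rat :=
  (1 - f i) * (1 - y i) / \sum_j (1 - f j) * (1 - y j).

Section Deg2Ratio.
Variables (f y : color -> rat) (i : color).
Hypotheses (f_range : forall j, 0 <= f j <= 4/7) (f_sum : \sum_j f j = 1)
  (y_range : forall j, 0 <= y j <= 1/2).

Let others := \sum_(j | j != i) (1 - f j) * (1 - y j).

Lemma deg2_ratioE :
  deg2_ratio f y i = (1 - f i) * (1 - y i) / ((1 - f i) * (1 - y i) + others).
Proof. by rewrite /deg2_ratio (bigD1 i). Qed.

Lemma sum_weights_others : \sum_(j | j != i) (1 - f j) = 2 + f i.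
Proof.
have fs := f_sum; rewrite (bigD1 i isT) /= in fs.
by rewrite sumrB sumr_const cardC1 card_ord /=; lra.
Qed.

Lemma others_ge_uniform b : (forall j, j != i -> y j <= b) ->
  (2 + f i) * (1 - b) <= others.
Proof.
move=> yb; rewrite -sum_weights_others mulr_suml; apply: ler_sum => j ji.
have := f_range j; have := yb j ji => *; apply: ler_wpM2l; lra.
Qed.

Lemma others_ge c b g : c != i -> y c <= g ->
  (forall j, j != i -> j != c -> y j <= b) ->
  (2 + f i - (1 - f c)) * (1 - b) + (1 - f c) * (1 - g) <= others.
Proof.
move=> ci ycg yb.
have rest : \sum_(j | (j != i) && (j != c)) (1 - f j) = 2 + f i - (1 - f c).
  by have ws := sum_weights_others; rewrite (bigD1 c ci) /= in ws; lra.
rewrite /others (bigD1 c ci) /= -rest mulr_suml addrC; apply: lerD.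
  apply: ler_sum => j /andP[ji jc]; have := f_range j; have := yb j ji jc => *.
  by apply: ler_wpM2l; lra.
by have := f_range c => *; apply: ler_wpM2l; lra.
Qed.

Lemma others_range : (2 + f i) / 2 <= others <= 2 + f i.
Proof.
apply/andP; split.
  have yb : forall j, j != i -> y j <= 1/2 by move=> j _; case/andP: (y_range j).
  by have := others_ge_uniform yb; lra.
rewrite -sum_weights_others; apply: ler_sum => j _.
by have := f_range j; have := y_range j => *; apply: ler_piMr; lra.
Qed.

Lemma deg2_ratio_range : 1/13 <= deg2_ratio f y i <= 1/2.
Proof.
rewrite deg2_ratioE; have := others_range; have := f_range i; have := y_range i.
move=> /andP[y0 y1] /andP[f0 f1] /andP[o1 o2].
have a1 : (1 - f i) / 2 <= (1 - f i) * (1 - y i) by apply: ler_wpM2l; lra.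
have a2 : (1 - f i) * (1 - y i) <= 1 - f i by apply: ler_piMr; lra.
by apply/andP; split; [rewrite ler_pdivlMr | rewrite ler_pdivrMr]; lra.
Qed.

Lemma deg2_ratio_le_of_ge : 1/13 <= f i \/ 1/13 <= y i -> deg2_ratio f y i <= 13/27.
Proof.
rewrite deg2_ratioE; have := others_range; have := f_range i; have := y_range i.
move=> /andP[y0 y1] /andP[f0 f1] /andP[o1 o2] big_i.
have a0 : 0 <= (1 - f i) * (1 - y i) by apply: mulr_ge0; lra.
have a1 : (1 - f i) * (1 - y i) <= 12/13.
  by case: big_i => h; [apply: le_trans (ler_piMr _ _) _ | apply: le_trans (ler_piMl _ _) _];
     lra.
by rewrite ler_pdivrMr; lra.
Qed.

Section FreeColour.
Hypotheses (fi0 : f i = 0) (yi0 : y i = 0).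

(* Now the weights 1 - f j (j != i) sum to 2 and are at least 3/7, so [others] is twice a
   weighted mean of the 1 - y j. *)

Lemma deg2_ratio_free : deg2_ratio f y i = 1 / (1 + others).
Proof. by rewrite deg2_ratioE fi0 yi0 subr0 mulr1. Qed.

Lemma deg2_ratio_free_le : 14/13 <= others -> deg2_ratio f y i <= 13/27.
Proof. by move=> o; rewrite deg2_ratio_free ler_pdivrMr; lra. Qed.

Lemma deg2_ratio_half : (forall j, j != i -> y j = 1/2) -> deg2_ratio f y i = 1/2.
Proof.
move=> yh; rewrite deg2_ratio_free; have -> : others = 1.
  rewrite /others (eq_bigr (fun j => (1 - f j) * (1 - 1/2))) => [|j ji]; last by rewrite yh.
  by rewrite -mulr_suml sum_weights_others fi0; lra.
by [].
Qed.

Lemma deg2_ratio_le_uniform : (forall j, j != i -> y j <= 6/13) -> deg2_ratio f y i <= 13/27.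
Proof.
by move=> yb; apply: deg2_ratio_free_le; have := others_ge_uniform yb; rewrite fi0; lra.
Qed.

Lemma deg2_ratio_le_zero c : c != i -> y c = 0 -> deg2_ratio f y i <= 13/27.
Proof.
move=> ci yc; apply: deg2_ratio_free_le.
have yb : forall j, j != i -> j != c -> y j <= 1/2 by move=> j _ _; case/andP: (y_range j).
by have := others_ge ci (_ : y c <= 0) yb; have := f_range c; rewrite fi0 yc lexx; lra.
Qed.

Lemma deg2_ratio_le_exception c : c != i ->
  (forall j, j != i -> j != c -> y j <= 5/12) -> deg2_ratio f y i <= 13/27.
Proof.
move=> ci yb; apply: deg2_ratio_free_le.
have yc : y c <= 1/2 by case/andP: (y_range c).
by have := others_ge ci yc yb; have := f_range c; rewrite fi0; lra.
Qed.

End FreeColour.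

End Deg2Ratio.

Definition normalize (g : color -> rat) (A : {set color}) (j : color) : rat :=
  if j \in A then g j / \sum_(w in A) g w else 0.

Lemma half_pow_bounds n : (n <= 2)%N ->
  1/4 <= (1/2 : rat) ^+ n /\ (3/4 : rat) <= n.+1%:R * (1/2) ^+ n.
Proof. by case: n => [|[|[|n]]] // _; rewrite ?expr0 ?expr1 ?expr2; split; lra. Qed.

Lemma sum_others_bounds (g : color -> rat) (A : {set color}) n j :
  (n <= 2)%N -> (n + 2 <= #|A|)%N -> (forall w, (1/2) ^+ n <= g w <= 1) -> j \in A ->
  3/4 <= \sum_(w in A | w != j) g w <= 3.
Proof.
move=> n2 nA gb jA; have [_ c34] := half_pow_bounds n2.
have cardD : #|A :\ j| = #|A|.-1 by rewrite (cardsD1 j A) jA.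
rewrite (eq_bigl (mem (A :\ j))) => [|w]; last by rewrite !inE andbC.
have lo : n.+1%:R * (1/2) ^+ n <= \sum_(w in A :\ j) g w.
  apply: le_trans (_ : \sum_(w in A :\ j) (1/2) ^+ n <= _); last first.
    by apply: ler_sum => w _; case/andP: (gb w).
  rewrite sumr_const cardD -[X in _ <= X]mulr_natl.
  by apply: ler_wpM2r; [exact: exprn_ge0 | rewrite ler_nat; lia].
have hi : \sum_(w in A :\ j) g w <= 3.
  apply: le_trans (_ : _ <= \sum_(w in A :\ j) 1) _.
    by apply: ler_sum => w _; case/andP: (gb w).
  by rewrite sumr_const cardD ler_nat; have := card_colors A; lia.
by apply/andP; split; lra.
Qed.

Lemma normalize_bounds (g : color -> rat) (A : {set color}) n :
  (n <= 2)%N -> (n + 2 <= #|A|)%N -> (forall w, (1/2) ^+ n <= g w <= 1) ->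
  [/\ forall j, 0 <= normalize g A j <= 4/7, \sum_j normalize g A j = 1 &
      forall j, j \in A -> 1/13 <= normalize g A j].
Proof.
move=> n2 nA gb; have rest := sum_others_bounds n2 nA gb.
have g_pos j : 1/4 <= g j <= 1 by have [c14 _] := half_pow_bounds n2; have := gb j; lra.
split.
- move=> j; rewrite /normalize; case: ifP => jA; last by lra.
  rewrite (bigD1 j jA) /=; have := rest j jA; have := g_pos j.
  by move=> /andP[g0 g1] /andP[r0 r1]; apply/andP; split;
    [apply: divr_ge0 | rewrite ler_pdivrMr]; lra.
- have [j0 jA0] : exists j, j \in A by apply/set0Pn; rewrite -card_gt0; lia.
  have S0 : 0 < \sum_(w in A) g w.
    by rewrite (bigD1 j0 jA0) /=; have := rest j0 jA0; have := g_pos j0; lra.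
  rewrite (bigID (mem A)) /= [X in _ + X]big1 ?addr0 => [|j /negbTE jA]; last first.
    by rewrite /normalize jA.
  rewrite (eq_bigr (fun j => g j / \sum_(w in A) g w)) => [|j jA]; last by rewrite /normalize jA.
  by rewrite -mulr_suml divff // gt_eqF.
- move=> j jA; rewrite /normalize jA (bigD1 j jA) /=.
  have := rest j jA; have := g_pos j => /andP[g0 g1] /andP[r0 r1].
  by rewrite ler_pdivlMr; lra.
Qed.

Lemma prod_one_minus_bounds n (F : 'I_n -> rat) : (forall k, 0 <= F k <= 1/2) ->
  (1/2) ^+ n <= \prod_(k < n) (1 - F k) <= 1.
Proof.
move=> HF; apply/andP; split.
  rewrite -[n in _ ^+ n]card_ord -prodr_const; apply: ler_prod => k _.
  by have := HF k; lra.
by apply: prodr_ile1 => k _; have := HF k; lra.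
Qed.

Lemma inv_card_range G L v : reachable G L v -> 1/4 <= (#|L v|%:R^-1 : rat) <= 1/2.
Proof.
case=> _ [_ _ lv]; have : (2 <= #|L v|)%N by lia.
by have := card_colors (L v); case: #|L v| => [|[|[|[|[|n]]]]] // _ _; apply/andP; split; lra.
Qed.

Lemma deg1_card G L v : reachable G L v -> deg G v = 1%N -> #|L v| = 3%N \/ #|L v| = 4%N.
Proof. by case=> _ [_ _ lv] dv; have := card_colors (L v); lia. Qed.

Lemma inv_card_le_1_3 (A : {set color}) : (3 <= #|A|)%N -> (#|A|%:R^-1 : rat) <= 1/3.
Proof. by have := card_colors A; case: #|A| => [|[|[|[|[|n]]]]] // _ _; lra. Qed.

Lemma ge2_of_shift (Q : nat -> Prop) : (forall D, Q D.+2) -> forall D, (2 <= D)%N -> Q D.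
Proof. by move=> h [|[|D]]. Qed.

(** * The procedure *)

Definition weight (pk : order_fun) D G (L : lists) v v1 (w : color) : rat :=
  let us := pk (delv G v) v1 in
  \prod_(k < size us)
     (1 - P pk D (delv (delv G v) v1) (remove_before us k w L) (nth 0%N us k) w).

Definition second_prob (pk : order_fun) D G (L : lists) v v1 v2 (j : color) : rat :=
  P pk D (delv G v) (remove_before [:: v1; v2] 1 j L) v2 j.

Section Procedure.
Variable pk : order_fun.
Hypothesis Hpk : valid_order pk.

Section Unfold.
Variables (G : graph) (L : lists) (v : nat) (i : color).

Lemma P_notin D : i \notin L v -> P pk D G L v i = 0.
Proof. by case: D => [|D] /= ->. Qed.

Lemma P_depth0 : i \in L v -> P pk 0 G L v i = #|L v|%:R^-1.
Proof. by move=> /= ->. Qed.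

Lemma P_deg0 D : i \in L v -> pk G v = [::] -> P pk D G L v i = #|L v|%:R^-1.
Proof. by case: D => [|D] /= -> // ->. Qed.

Lemma P_deg1_card4 D u : i \in L v -> pk G v = [:: u] -> #|L v| = 4%N ->
  P pk D.+1 G L v i = (1 - P pk D (delv G v) L u i) / 3.
Proof. by move=> /= -> -> ->. Qed.

Lemma P_deg1_card3 D u k : i \in L v -> pk G v = [:: u] -> #|L v| = 3%N -> k \notin L v ->
  P pk D.+1 G L v i = (1 - P pk D (delv G v) L u i) / (2 + P pk D (delv G v) L u k).
Proof.
move=> /= -> -> cL kL; rewrite cL /=.
by case: pickP => [k' | /(_ k)]; rewrite in_setC ?kL // => /(card3_missing_uniq cL kL) ->.
Qed.

Lemma P_deg2 a b : reachable G L v -> pk G v = [:: a; b] ->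
  exists v1 v2, [/\ adj G v v1, adj G v v2, v1 != v2 & forall D,
    P pk D.+1 G L v i =
    deg2_ratio (normalize (weight pk D G L v v1) (L v1)) (second_prob pk D G L v v1 v2) i].
Proof.
move=> [_ [_ _ lv]] Ep.
have Lv : forall j, j \in L v by apply: colors_full; rewrite -(size_pk Hpk) Ep in lv.
have aa : adj G v a by rewrite -(mem_pk Hpk) Ep inE eqxx.
have ab : adj G v b by rewrite -(mem_pk Hpk) Ep !inE eqxx orbT.
have nab : a != b by have := uniq_pk Hpk G v; rewrite Ep /= inE andbT.
pose sw := (deg G a < deg G b)%N ||
           [&& deg G a == 1%N, deg G b == 1%N, i \notin L a & i \in L b].
exists (if sw then b else a), (if sw then a else b).
split; [by case: sw | by case: sw | by case: sw; rewrite // eq_sym | move=> D].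
rewrite /= Lv Ep /deg2_ratio; congr (_ / _).
by apply: eq_bigl => j; rewrite Lv.
Qed.

End Unfold.

Definition half_bounded D : Prop :=
  forall G L v i, reachable G L v -> 0 <= P pk D G L v i <= 1/2.

Section Deg2Parts.
Variables (D : nat) (G : graph) (L : lists) (v v1 v2 : nat).
Hypotheses (HD : half_bounded D) (Hr : reachable G L v)
  (a1 : adj G v v1) (a2 : adj G v v2) (n12 : v1 != v2).

Lemma normalize_weight_bounds :
  let f := normalize (weight pk D G L v v1) (L v1) in
  [/\ forall j, 0 <= f j <= 4/7, \sum_j f j = 1 & forall j, j \in L v1 -> 1/13 <= f j].
Proof.
have [_ [_ d1 l1]] := reachable_nbr Hr a1; apply: normalize_bounds d1 l1 _ => w.
rewrite /weight -(size_pk Hpk); apply: prod_one_minus_bounds => k.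
by apply: HD; apply: reachable_grandchild.
Qed.

Lemma second_prob_bounds j : 0 <= second_prob pk D G L v v1 v2 j <= 1/2.
Proof. by apply: HD; apply: reachable_second. Qed.

End Deg2Parts.

Lemma P_deg1_range D G L v u i : half_bounded D -> reachable G L v ->
  pk G v = [:: u] -> i \in L v -> 1/6 <= P pk D.+1 G L v i <= 1/2.
Proof.
move=> HD Hr Ep Hi; have dv : deg G v = 1%N by rewrite -(size_pk Hpk) Ep.
have /(reachable_nbr Hr) Ru : adj G v u by rewrite -(mem_pk Hpk) Ep inE.
have := HD _ _ _ i Ru; case: (deg1_card Hr dv) => cL.
  have [k kL] := card3_missing cL; have := HD _ _ _ k Ru.
  rewrite (P_deg1_card3 _ Hi Ep cL kL) => /andP[y0 y1] /andP[x0 x1].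
  by apply/andP; split; [rewrite ler_pdivlMr | rewrite ler_pdivrMr]; lra.
by rewrite (P_deg1_card4 _ Hi Ep cL); lra.
Qed.

Lemma P_deg2_range D G L v a b i : half_bounded D -> reachable G L v ->
  pk G v = [:: a; b] -> 1/13 <= P pk D.+1 G L v i <= 1/2.
Proof.
move=> HD Hr Ep; have [v1 [v2 [a1 a2 n12 ->]]] := P_deg2 i Hr Ep.
have [fr fs _] := normalize_weight_bounds HD Hr a1.
exact: deg2_ratio_range fr fs (second_prob_bounds HD Hr a1 a2 n12).
Qed.

Lemma P_range D G L v i : reachable G L v -> 0 <= P pk D G L v i <= 1/2.
Proof.
elim: D G L v i => [|D IH] G L v i Hr;
  (case: (boolP (i \in L v)) => Hi; last by rewrite (P_notin _ _ Hi); lra);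
  have [_ [_ dv _]] := Hr; have Linv := inv_card_range Hr.
  by rewrite (P_depth0 _ Hi); lra.
case Ep: (pk G v) (size_pk Hpk G v) => [|u [|a [|b s]]] dG; rewrite /= in dG.
- by rewrite (P_deg0 _ Hi Ep); lra.
- by have := P_deg1_range IH Hr Ep Hi; lra.
- by have := P_deg2_range i IH Hr Ep; lra.
- by exfalso; move: dv; rewrite -dG.
Qed.

Lemma P_ge_1_6 D G L v i : reachable G L v -> i \in L v -> (deg G v <= 1)%N ->
  1/6 <= P pk D G L v i.
Proof.
move=> Hr Hi d1; have Linv := inv_card_range Hr.
case: D => [|D]; first by rewrite (P_depth0 _ Hi); lra.
case Ep: (pk G v) (size_pk Hpk G v) => [|u [|a s]] dG; rewrite /= in dG.
- by rewrite (P_deg0 _ Hi Ep); lra.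
- by have := P_deg1_range (@P_range D) Hr Ep Hi; lra.
- by exfalso; move: d1; rewrite -dG.
Qed.

Lemma P_ge_1_13 D G L v i : reachable G L v -> i \in L v -> 1/13 <= P pk D G L v i.
Proof.
move=> Hr Hi; have [_ [_ dv _]] := Hr.
case: (leqP (deg G v) 1) => [d1 | d2]; first by have := P_ge_1_6 D Hr Hi d1; lra.
case: D => [|D]; first by have := inv_card_range Hr; rewrite (P_depth0 _ Hi); lra.
case Ep: (pk G v) (size_pk Hpk G v) => [|a [|b [|c s]]] dG; rewrite /= in dG; try lia.
by have := P_deg2_range i (@P_range D) Hr Ep; lra.
Qed.

Section Deg1.
Variables (D : nat) (G : graph) (L : lists) (v u : nat) (i k : color).
Hypotheses (Hr : reachable G L v) (Ep : pk G v = [:: u]) (Hi : i \in L v)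
  (cL : #|L v| = 3%N) (kL : k \notin L v).

Local Notation x c := (P pk D (delv G v) L u c).

Let Ru : reachable (delv G v) L u.
Proof. by apply: reachable_nbr Hr _; rewrite -(mem_pk Hpk) Ep inE. Qed.

Let x_range c : 0 <= x c <= 1/2.
Proof. exact: P_range. Qed.

Let deg_u_le1 c : c \notin L u -> (deg (delv G v) u <= 1)%N.
Proof. by have [_ [_ _ lu]] := Ru; move/card_le3_of_notin; lia. Qed.

Let Pv : P pk D.+1 G L v i = (1 - x i) / (2 + x k).
Proof. exact: P_deg1_card3. Qed.

Lemma P_deg1_half : i \notin L u -> k \notin L u -> P pk D.+1 G L v i = 1/2.
Proof. by move=> iu ku; rewrite Pv (P_notin _ _ iu) (P_notin _ _ ku) subr0 addr0. Qed.

Lemma P_deg1_le_6_13 : (i \in L u) || (k \in L u) -> P pk D.+1 G L v i <= 6/13.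
Proof.
move=> iku; rewrite Pv ler_pdivrMr; last by have := x_range k; lra.
have := x_range i; have := x_range k => /andP[y0 y1] /andP[x0 x1].
case: (boolP (i \in L u)) => iu.
  by have : 1/13 <= x i := P_ge_1_13 D Ru iu; lra.
have ku : k \in L u by rewrite (negbTE iu) in iku.
have : 1/6 <= x k := P_ge_1_6 D Ru ku (deg_u_le1 iu).
by rewrite (P_notin _ _ iu); lra.
Qed.

Lemma P_deg1_le_5_12 : i \in L u -> k \notin L u -> P pk D.+1 G L v i <= 5/12.
Proof.
move=> iu ku; rewrite Pv (P_notin _ _ ku) ler_pdivrMr; last lra.
by have : 1/6 <= x i := P_ge_1_6 D Ru iu (deg_u_le1 ku); lra.
Qed.

End Deg1.

Lemma deg1_dichotomy G L v u i : reachable G L v -> pk G v = [:: u] -> i \in L v ->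
  ([/\ adj G v u, i \notin L u & exists j : color, [/\ j != i, j \notin L u & j \notin L v]] /\
   forall D, P pk D.+1 G L v i = 1/2) \/
  (forall D, P pk D.+1 G L v i <= 6/13).
Proof.
move=> Hr Ep Hi; have au : adj G v u by rewrite -(mem_pk Hpk) Ep inE.
have dv : deg G v = 1%N by rewrite -(size_pk Hpk) Ep.
case: (deg1_card Hr dv) => cL; last first.
  right => D; rewrite (P_deg1_card4 _ Hi Ep cL).
  by have := P_range D i (reachable_nbr Hr au); lra.
have [k kL] := card3_missing cL.
case: (boolP ((i \in L u) || (k \in L u))) => [iku | /norP[iu ku]].
  by right => D; exact: P_deg1_le_6_13 Hr Ep Hi cL kL iku.
left; split=> [|D]; last exact: P_deg1_half Ep Hi cL kL iu ku.
by split => //; exists k; split => //; apply: contraNneq kL => ->.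
Qed.

Section Deg2.
Variables (D : nat) (G : graph) (L : lists) (v v1 v2 : nat) (i : color).
Hypotheses (Hr : reachable G L v) (a1 : adj G v v1) (a2 : adj G v v2) (n12 : v1 != v2).

Local Notation f := (normalize (weight pk D.+1 G L v v1) (L v1)).
Local Notation y := (second_prob pk D.+1 G L v v1 v2).
Local Notation L' j := (remove_before [:: v1; v2] 1 j L).

Let y_range j : 0 <= y j <= 1/2.
Proof. exact: second_prob_bounds (@P_range D.+1) Hr a1 a2 n12 j. Qed.

Let L'_v1 j : L' j v1 = L v1 :\ j.
Proof. by rewrite remove_before_in //= inE. Qed.

Let L'_v2 j : L' j v2 = L v2.
Proof. by rewrite remove_before_notin //= inE eq_sym. Qed.

Lemma deg2_le_of_mem : (i \in L v1) || (i \in L v2) -> deg2_ratio f y i <= 13/27.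
Proof.
have [fr fs fl] := normalize_weight_bounds (@P_range D.+1) Hr a1.
move=> imem; apply: (deg2_ratio_le_of_ge fr fs y_range).
case/orP: imem => [i1 | i2]; [left; exact: fl | right].
by apply: P_ge_1_13 (reachable_second _ Hr a1 a2 n12) _; rewrite L'_v2.
Qed.

Section FreeColour.
Hypotheses (i1 : i \notin L v1) (i2 : i \notin L v2).

Let fi0 : f i = 0.
Proof. by rewrite /normalize (negbTE i1). Qed.

Let yi0 : y i = 0.
Proof. by rewrite /second_prob P_notin // L'_v2. Qed.

Let deg_v2 : (deg (delv G v) v2 <= 1)%N.
Proof. by have [_ [_ _]] := reachable_nbr Hr a2; have := card_le3_of_notin i2; lia. Qed.

Let pk_v2 : pk (delv G v) v2 = [::] \/ exists u, pk (delv G v) v2 = [:: u].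
Proof.
move: deg_v2; rewrite -(size_pk Hpk).
by case: (pk _ _) => [|u [|]] // _; [left | right; exists u].
Qed.

Let adj12 : adj G v1 v2 = (v1 \in pk (delv G v) v2).
Proof.
have nv1 : v1 != v by rewrite eq_sym (adj_neq a1).
have nv2 : v2 != v by rewrite eq_sym (adj_neq a2).
by rewrite (mem_pk Hpk) adj_delv nv1 nv2 !andbT adjC.
Qed.

(* For j != i, y j is P at v2, of degree 1 in G_v and with a list missing exactly i, so
   the degree-1 lemmas apply with k := i. *)
Let y_deg1 u j : pk (delv G v) v2 = [:: u] -> j != i ->
  [/\ reachable (delv G v) (L' j) v2, j \in L' j v2, #|L' j v2| = 3%N & i \notin L' j v2].
Proof.
move=> Eu ji; have R2 := reachable_second j Hr a1 a2 n12.
have d1 : deg (delv G v) v2 = 1%N by rewrite -(size_pk Hpk) Eu.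
have c3 : #|L v2| = 3%N.
  by have [_ [_ _]] := R2; rewrite L'_v2 d1; have := card_le3_of_notin i2; lia.
rewrite !L'_v2; split => //; apply: contraT => jL.
by rewrite (card3_missing_uniq c3 jL i2) eqxx in ji.
Qed.

Lemma deg2_isolated : pk (delv G v) v2 = [::] -> deg2_ratio f y i <= 13/27.
Proof.
move=> E0; have [fr fs _] := normalize_weight_bounds (@P_range D.+1) Hr a1.
have yE j : y j = if j \in L v2 then #|L v2|%:R^-1 else 0.
  rewrite /second_prob; case: ifP => jL.
    have jL' : j \in L' j v2 by rewrite L'_v2.
    by rewrite (P_deg0 _ jL' E0) L'_v2.
  have jL' : j \notin L' j v2 by rewrite L'_v2 jL.
  by rewrite (P_notin _ _ jL').
have [_ [_ _ l2]] := reachable_nbr Hr a2.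
have [c3 | c3] := eqVneq #|L v2| 3%N.
  apply: (deg2_ratio_le_uniform fr fs fi0 yi0) => j _.
  by rewrite yE c3; case: ifP => _; lra.
have c2 : #|L v2| = 2%N by have := card_le3_of_notin i2; lia.
have [c ci cL] := card2_missing_other c2 i2.
by apply: (deg2_ratio_le_zero fr fs y_range fi0 yi0 ci); rewrite yE (negbTE cL).
Qed.

Lemma deg2_path u : pk (delv G v) v2 = [:: u] -> u != v1 -> deg2_ratio f y i <= 13/27.
Proof.
move=> Eu uv1; have L'u j : L' j u = L u by rewrite remove_before_notin //= inE.
have Lu2 : (2 <= #|L u|)%N.
  have au : adj (delv G v) u v2 by rewrite adjC -(mem_pk Hpk) Eu inE.
  have [ok _] := reachable_nbr Hr a2; have [uG _] := andP (adj_mem au).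
  by have := (ok u uG).2; have := deg_gt0 au; lia.
have [fr fs _] := normalize_weight_bounds (@P_range D.+1) Hr a1.
have [iu | iu] := boolP (i \in L u).
  apply: (deg2_ratio_le_uniform fr fs fi0 yi0) => j ji.
  have [R jL c3 iL] := y_deg1 Eu ji.
  by apply: P_deg1_le_6_13 R Eu jL c3 iL _; rewrite L'u iu orbT.
have [c ci cE] := missing_other_uniq Lu2 iu.
apply: (deg2_ratio_le_exception fr fs y_range fi0 yi0 ci) => j ji jc.
have [R jL c3 iL] := y_deg1 Eu ji.
have ju : j \in L u by apply: contraT => /(cE j ji) jeq; rewrite jeq eqxx in jc.
by apply: P_deg1_le_5_12 R Eu jL c3 iL _ _; rewrite L'u.
Qed.

Lemma deg2_half : adj G v1 v2 -> deg2_ratio f y i = 1/2.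
Proof.
move=> a12; have [_ fs _] := normalize_weight_bounds (@P_range D.+1) Hr a1.
have [E0 | [u Eu]] := pk_v2; first by exfalso; move: a12; rewrite adj12 E0.
have uv1 : u = v1 by move: a12; rewrite adj12 Eu inE => /eqP.
rewrite uv1 in Eu; apply: (deg2_ratio_half fs fi0 yi0) => j ji.
have [R jL c3 iL] := y_deg1 Eu ji.
by apply: P_deg1_half Eu jL c3 iL _ _; rewrite L'_v1 !inE ?eqxx // (negbTE i1) andbF.
Qed.

Lemma deg2_le : ~~ adj G v1 v2 -> deg2_ratio f y i <= 13/27.
Proof.
move=> na12; have [E0 | [u Eu]] := pk_v2; first exact: deg2_isolated.
apply: (deg2_path Eu); apply: contraNneq na12 => uv1.
by rewrite adj12 Eu uv1 inE.
Qed.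

End FreeColour.

End Deg2.

Lemma deg2_dichotomy G L v i a b : reachable G L v -> pk G v = [:: a; b] ->
  ((exists u1 u2, [/\ adj G v u1, adj G v u2, adj G u1 u2 & i \notin L u1 :|: L u2]) /\
   forall D, P pk D.+2 G L v i = 1/2) \/
  (forall D, P pk D.+2 G L v i <= 13/27).
Proof.
move=> Hr Ep; have [v1 [v2 [a1 a2 n12 PE]]] := P_deg2 i Hr Ep.
have [imem | /norP[i1 i2]] := boolP ((i \in L v1) || (i \in L v2)).
  by right => D; rewrite PE; apply: deg2_le_of_mem Hr a1 a2 n12 imem.
have [a12 | na12] := boolP (adj G v1 v2).
  left; split=> [|D]; last by rewrite PE; apply: deg2_half Hr a1 a2 n12 i1 i2 a12.
  by exists v1, v2; rewrite inE negb_or i1 i2.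
by right => D; rewrite PE; apply: deg2_le Hr a1 a2 n12 i1 i2 na12.
Qed.

Definition tight G (L : lists) v (i : color) : Prop :=
  (deg G v = 0%N /\
     exists j w : color, [/\ j != w, j != i, w != i, j \notin L v & w \notin L v]) \/
  (deg G v = 1%N /\
     exists u, [/\ adj G v u, i \notin L u &
                  exists j : color, [/\ j != i, j \notin L u & j \notin L v]]) \/
  (deg G v = 2%N /\
     exists u1 u2, [/\ adj G v u1, adj G v u2, adj G u1 u2 & i \notin L u1 :|: L u2]).

Lemma P_dichotomy G L v i : reachable G L v ->
  (tight G L v i /\ forall D, (2 <= D)%N -> P pk D G L v i = 1/2) \/
  ((forall D, (2 <= D)%N -> P pk D G L v i <= 13/27) /\
   ((deg G v <= 1)%N -> forall D, (2 <= D)%N -> P pk D G L v i <= 6/13)).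
Proof.
move=> Hr; have [_ [_ dv lv]] := Hr.
have [Hi | Hi] := boolP (i \in L v); last first.
  by right; split=> [|_] D _; rewrite (P_notin _ _ Hi); lra.
case Ep: (pk G v) (size_pk Hpk G v) => [|u [|a [|b s]]] dG; rewrite /= in dG.
- have PE D : P pk D G L v i = #|L v|%:R^-1 := P_deg0 D Hi Ep.
  have [c2 | c2] := eqVneq #|L v| 2%N.
    left; split=> [|D _]; last by rewrite PE c2 mul1r.
    by left; split; [rewrite dG | exact: card2_two_missing].
  have : (#|L v|%:R^-1 : rat) <= 1/3 by apply: inv_card_le_1_3; lia.
  by right; split=> [|_] D _; rewrite PE; lra.
- have [[T half] | le] := deg1_dichotomy Hr Ep Hi.
    left; split; last by apply: ge2_of_shift => D; exact: half.
    by right; left; split; [rewrite dG | exists u].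
  by right; split=> [|_]; apply: ge2_of_shift => D; have := le D.+1; lra.
- have [[T half] | le] := deg2_dichotomy i Hr Ep.
    left; split; last exact: ge2_of_shift half.
    by right; right; split; [rewrite dG |].
  by right; split=> [|d1]; [exact: ge2_of_shift le | exfalso; rewrite -dG in d1].
- by exfalso; move: dv; rewrite -dG.
Qed.

End Procedure.

Theorem theorem11 (pk : order_fun) (G : graph) (L : lists) (v : nat) (i : color) :
  valid_order pk -> reachable G L v ->
  ((forall D, (2 <= D)%N -> P pk D G L v i = 1 / 2) \/
   ((forall D, (2 <= D)%N -> P pk D G L v i <= 13 / 27) /\
    ((deg G v <= 1)%N -> forall D, (2 <= D)%N -> P pk D G L v i <= 6 / 13))) /\
  ((exists D, (2 <= D)%N /\ P pk D G L v i = 1 / 2) ->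
    (deg G v = 0%N /\
       exists j w : color, [/\ j != w, j != i, w != i, j \notin L v & w \notin L v]) \/
    (deg G v = 1%N /\
       exists u, [/\ adj G v u, i \notin L u &
                    exists j : color, [/\ j != i, j \notin L u & j \notin L v]]) \/
    (deg G v = 2%N /\
       exists u1 u2, [/\ adj G v u1, adj G v u2, adj G u1 u2 & i \notin L u1 :|: L u2])).
Proof.
move=> Hpk Hr.
have [[T half] | [le le1]] := P_dichotomy Hpk i Hr.
  by split; [left | move=> _; exact: T].
split; first by right.
by case=> D [D2 PD]; have := le D D2; rewrite PD => h; exfalso; lra.
Qed.
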